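(* Let $\Delta$ be a finite simplicial complex, $\mathbb{D}$ a PID, $(L,\leq)$ a CDL in which $0$ is meet-prime, and $\mu$ an $L$-fuzzy subcomplex of $\Delta$ with $\mu^*=\Delta$. Then the $L$-fuzzy $d$-homology $\eta_d$ of $\mu$ is an $L$-fuzzy submodule of $H_d=Z_d/B_d$ (i.e. $\langle\zeta_d^*\rangle=Z_d$, $\langle\beta_d^*\rangle=B_d$), and for every $[h]\in H_d$, $$\eta_d([h])=\bigvee\{\zeta_d(z)\mid z\in[h]\}=\bigvee\{\kappa_d(z)\mid z\in[h]\}.$$ Moreover $\eta_d([h])>0$ for all $[h]\in H_d$, i.e. $\eta_d^*=H_d$.
   Context: CDL: a poset where every subset has a join $\bigvee$ and meet $\bigwedge$, with arbitrary meets and joins distributing; $0=\bigvee\emptyset$, $1=\bigwedge\emptyset$. $0$ is meet-prime if $a\wedge b=0$ implies $a=0$ or $b=0$. An $L$-fuzzy subcomplex of $\Delta$ is $\mu:\Delta\to L$ with $\mu(\sigma_1)\geq\mu(\sigma_2)$ whenever $\sigma_1$ is a face of $\sigma_2$; $\mu^*=\{\sigma\mid\mu(\sigma)\neq0\}$. An $L$-fuzzy submodule of a $\mathbb{D}$-module $M$ is $\nu:M\to L$ with $\nu(0)=1$, $\nu(m_1+m_2)\geq\nu(m_1)\wedge\nu(m_2)$, $\nu(am)\geq\nu(m)$; $\langle\nu\rangle$ is the pointwise meet of all $L$-fuzzy submodules containing $\nu$; $\langle S\rangle$ the submodule generated by a set $S$; $\nu^*=\{x\mid\nu(x)\neq0\}$.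 Chains: with an ordering of vertices, $\sigma^d_1,\dots,\sigma^d_{n_d}$ are the positively oriented $d$-simplices, $C_d$ the free $\mathbb{D}$-module on them, $\partial_d$ the usual boundary, $Z_d=\ker\partial_d$, $B_d=\operatorname{im}\partial_{d+1}$, $H_d=Z_d/B_d$, $[h]=h+B_d$. Fuzzy homology of $\mu$: $\delta_d(\sigma^d_i)=\mu(\sigma^d_i)$ and $\delta_d=0$ off the basis; $\kappa_d=\langle\delta_d\rangle$; $\zeta_d(c)=\kappa_d(c)$ if $\partial_dc=0$, else $0$; $\beta_d(c)=\kappa_d(c)\wedge\bigvee\{\kappa_{d+1}(a)\mid\partial_{d+1}a=c\}$; and $\eta_d=\zeta_d/\beta_d$ is the map on $\langle\zeta_d^*\rangle/\langle\beta_d^*\rangle$ given by $\eta_d(m+\langle\beta_d^*\rangle)=\bigvee\{\zeta_d(n)\mid n\in m+\langle\beta_d^*\rangle\}$. *)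

From HB Require Import structures.
From mathcomp Require Import all_boot all_order all_algebra.
Set Implicit Arguments. Unset Strict Implicit. Unset Printing Implicit Defensive.
Import Order.TTheory GRing.Theory.
Local Open Scope ring_scope.
Local Open Scope order_scope.

Definition ideal_of (R : idomainType) (I : R -> Prop) : Prop :=
  [/\ I 0, (forall x y, I x -> I y -> I (x + y)),
      (forall x, I x -> I (- x)) & (forall r x, I x -> I (r * x))].

Definition PID (R : idomainType) : Prop :=
  forall I : R -> Prop, ideal_of I -> exists a : R, forall x, I x <-> exists r, x = r * a.

Definition CDL (disp : Order.disp_t) (L : latticeType disp)
    (sup inf : (L -> Prop) -> L) : Prop :=
  [/\ (forall S : L -> Prop, (forall x, S x -> x <= sup S) /\
          (forall u, (forall x, S x -> x <= u) -> sup S <= u)),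
      (forall S : L -> Prop, (forall x, S x -> inf S <= x) /\
          (forall u, (forall x, S x -> u <= x) -> u <= inf S)),
      (forall (a : L) (S : L -> Prop),
          Order.meet a (sup S) = sup (fun y => exists2 x, S x & y = Order.meet a x)) &
      (forall (a : L) (S : L -> Prop),
          Order.join a (inf S) = inf (fun y => exists2 x, S x & y = Order.join a x))].

Definition botL (disp : Order.disp_t) (L : latticeType disp) (sup : (L -> Prop) -> L) : L :=
  sup (fun _ => False).
Definition topL (disp : Order.disp_t) (L : latticeType disp) (inf : (L -> Prop) -> L) : L :=
  inf (fun _ => False).

(* 0 is meet-prime: (as for any prime element) 0 <> 1, and a /\ b = 0 -> a = 0 \/ b = 0 *)
Definition zero_meet_prime (disp : Order.disp_t) (L : latticeType disp)
    (sup inf : (L -> Prop) -> L) : Prop :=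
  botL sup <> topL inf /\
  forall a b : L, Order.meet a b = botL sup -> a = botL sup \/ b = botL sup.

Definition simplicial_complex (n : nat) (Delta : {set {set 'I_n}}) : Prop :=
  set0 \notin Delta /\
  forall s t : {set 'I_n}, s \in Delta -> t \subset s -> t != set0 -> t \in Delta.

Definition fuzzy_subcomplex (n : nat) (Delta : {set {set 'I_n}})
    (disp : Order.disp_t) (L : latticeType disp) (mu : {set 'I_n} -> L) : Prop :=
  forall s1 s2, s1 \in Delta -> s2 \in Delta -> s1 \subset s2 -> mu s2 <= mu s1.

Section FuzzyHomology.
Variables (n : nat) (Delta : {set {set 'I_n}}) (R : idomainType).
Variables (disp : Order.disp_t) (L : latticeType disp) (sup inf : (L -> Prop) -> L).
Variable mu : {set 'I_n} -> L.

Local Notation bot := (botL sup).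
Local Notation top := (topL inf).

(* chains: functions from (sets of vertices) to R; a simplex s is identified
   with its positively oriented version (vertices in increasing order). *)
Definition chain := {ffun {set 'I_n} -> R}.

Definition scalec (a : R) (c : chain) : chain := [ffun s => a * c s].

Definition elem (sigma : {set 'I_n}) : chain := [ffun s => (s == sigma)%:R].

Definition Cd (d : nat) (c : chain) : bool :=
  [forall s, (c s != 0) ==> (s \in Delta) && (#|s| == d.+1)%N].

(* incidence number [t : s] = (-1)^i if t is s with its i-th vertex removed *)
Definition incid (t s : {set 'I_n}) : R :=
  \sum_(v in s | t == s :\ v) (-1) ^+ #|[set u in s | (u < v)%N]|.

Definition bd (d : nat) (c : chain) : chain :=
  [ffun t => if (t \in Delta) && (#|t| == d)%N then
               \sum_(s in Delta | #|s| == d.+1) c s * incid t s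
             else 0].

Definition Zd (d : nat) (c : chain) : bool := Cd d c && (bd d c == 0).
Definition Bd (d : nat) (c : chain) : Prop := exists2 a, Cd d.+1 a & bd d.+1 a = c.

Definition submodule (P : chain -> Prop) : Prop :=
  [/\ P 0, (forall x y, P x -> P y -> P (x + y)) & (forall a x, P x -> P (scalec a x))].

Definition gen_sub (S : chain -> Prop) (x : chain) : Prop :=
  forall P, submodule P -> (forall y, S y -> P y) -> P x.

Definition fuzzy_submodule (P : chain -> Prop) (nu : chain -> L) : Prop :=
  [/\ nu 0 = top,
      (forall x y, P x -> P y -> Order.meet (nu x) (nu y) <= nu (x + y)) &
      (forall a x, P x -> nu x <= nu (scalec a x))].

Definition gen_fuzzy (P : chain -> Prop) (f : chain -> L) (x : chain) : L :=
  inf (fun l => exists nu, [/\ fuzzy_submodule P nu, (forall y, P y -> f y <= nu y) & l = nu x]).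

Definition supp (f : chain -> L) (x : chain) : Prop := f x <> bot.

Definition delta (d : nat) (c : chain) : L :=
  sup (fun l => exists sigma, [/\ sigma \in Delta, #|sigma| = d.+1 & c = elem sigma /\ l = mu sigma]).

Definition kappa (d : nat) : chain -> L := gen_fuzzy (Cd d) (delta d).

Definition zeta (d : nat) (c : chain) : L := if Zd d c then kappa d c else bot.

Definition beta (d : nat) (c : chain) : L :=
  if Cd d c then
    Order.meet (kappa d c) (sup (fun l => exists a, [/\ Cd d.+1 a, bd d.+1 a = c & l = kappa d.+1 a]))
  else bot.

(* eta_d = zeta_d / beta_d, evaluated at the class m + <beta_d^*> (via the representative m) *)
Definition eta_hom (d : nat) (m : chain) : L :=
  sup (fun l => exists nn, gen_sub (supp (beta d)) (nn - m) /\ l = zeta d nn).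

End FuzzyHomology.

(* Since 0 is meet-prime and mu vanishes nowhere on Delta, kappa_d vanishes nowhere on C_d:
   every fuzzy submodule containing delta_d is bounded below at a chain c by the finite meet
   of mu over the support of c.  Hence the supports of zeta_d and beta_d are Z_d and B_d, and
   eta_d is the supremum of zeta_d over a coset of B_d.  Taking suprema over cosets of a
   fuzzy submodule gives a fuzzy submodule of the quotient (meets distribute over joins) that
   dominates zeta_d, and on a coset of a cycle zeta_d agrees with kappa_d because B_d lies in
   Z_d. *)
From Pilot Require Import Defs.
From HB Require Import structures.
From mathcomp Require Import all_boot all_order all_algebra.
From Stdlib Require Import Classical.
Set Implicit Arguments. Unset Strict Implicit. Unset Printing Implicit Defensive.
Import Order.TTheory GRing.Theory.
Local Open Scope ring_scope.
Local Open Scope order_scope.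

Lemma sum_antisymmetric_pairs (R : zmodType) (I : finType) (P : rel I) (F : I -> I -> R) :
    (forall x y, P x y -> P y x) -> (forall x, ~~ P x x) ->
    (forall x y, P x y -> F y x = - F x y) ->
  \sum_(p : I * I | P p.1 p.2) F p.1 p.2 = 0.
Proof.
move=> Psym Pirr Fanti.
pose lt_rank (p : I * I) := (enum_rank p.1 < enum_rank p.2)%N.
rewrite (bigID lt_rank) /=.
rewrite [X in _ + X](reindex_inj (h := fun p : I * I => (p.2, p.1))); last first.
  by move=> [a b] [c e] [-> ->].
rewrite [X in _ + X](eq_bigl (fun p : I * I => P p.1 p.2 && lt_rank p)); last first.
  move=> [x y] /=; rewrite /lt_rank /=.
  case Pxy: (P x y); last by apply/negbTE; apply: contraFN Pxy => /andP[/Psym].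
  rewrite (Psym _ _ Pxy) /= -leqNgt leq_eqVlt; case: eqP => //= exy.
  by move: (Pirr x) Pxy; rewrite (enum_rank_inj (val_inj exy)) => /negbTE ->.
rewrite -big_split /=; apply: big1 => p /andP[Pp _].
by rewrite (Fanti _ _ Pp) subrr.
Qed.

Section Chains.
Variables (n : nat) (Delta : {set {set 'I_n}}) (R : idomainType).
Local Notation chain := (chain n R).

Lemma submod0 (P : chain -> Prop) : submodule P -> P 0.
Proof. by case. Qed.

Lemma submodD (P : chain -> Prop) x y : submodule P -> P x -> P y -> P (x + y).
Proof. by case=> _ hD _; apply: hD. Qed.

Lemma submodZ (P : chain -> Prop) a x : submodule P -> P x -> P (scalec a x).
Proof. by case=> _ _ hZ; apply: hZ. Qed.

Lemma submod_sum (P : chain -> Prop) (I : eqType) (r : seq I) (F : I -> chain) :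
  submodule P -> (forall i, i \in r -> P (F i)) -> P (\sum_(i <- r) F i).
Proof.
move=> hP hF; rewrite big_seq_cond; apply: (big_ind P) => //.
- exact: submod0.
- by move=> x y; apply: submodD.
- by move=> i /andP[/hF].
Qed.

Lemma scalec0 a : scalec a (0 : chain) = 0.
Proof. by apply/ffunP => t; rewrite !ffunE mulr0. Qed.

Lemma scalecB a (x y : chain) : scalec a (x - y) = scalec a x - scalec a y.
Proof. by apply/ffunP => t; rewrite !ffunE mulrBr. Qed.

Lemma gen_sub_id (S P : chain -> Prop) :
  submodule P -> (forall x, S x <-> P x) -> forall x, gen_sub S x <-> P x.
Proof.
move=> hP hSP x; split; first by apply; rewrite // => y /hSP.
by move=> Px Q _ hSQ; apply/hSQ/hSP.
Qed.

Lemma chain_expansion (x : chain) :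
  x = \sum_(s <- [seq s <- index_enum {set 'I_n} | x s != 0]) scalec (x s) (elem R s).
Proof.
apply/ffunP => t; rewrite big_filter sum_ffunE big_mkcond /=.
rewrite (bigD1 t) //= big1 => [|s Nst]; last first.
  by case: ifP => // _; rewrite !ffunE eq_sym (negbTE Nst) mulr0.
rewrite addr0; case: ifPn => [_|]; first by rewrite !ffunE eqxx mulr1.
by rewrite negbK => /eqP ->.
Qed.

Lemma Cd_submodule d : submodule (fun c : chain => Cd Delta d c).
Proof.
split.
- by apply/forallP => s; rewrite ffunE eqxx.
- move=> x y /forallP hx /forallP hy; apply/forallP => s; rewrite ffunE.
  apply/implyP => hxy; have [x0|] := eqVneq (x s) 0; last exact: implyP (hx s).
  by apply: (implyP (hy s)); rewrite x0 add0r in hxy.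
- move=> a x /forallP hx; apply/forallP => s; rewrite ffunE.
  by apply/implyP => hax; apply: (implyP (hx s)); apply: contraNneq hax => ->; rewrite mulr0.
Qed.

Lemma elem_Cd d s : s \in Delta -> #|s| = d.+1 -> Cd Delta d (elem R s).
Proof.
move=> hs hc; apply/forallP => t; rewrite ffunE.
by case: (eqVneq t s) => [->|_]; rewrite ?hs ?hc ?eqxx ?implybT.
Qed.

Lemma Cd_support d (x : chain) s : Cd Delta d x -> x s != 0 -> (s \in Delta) && (#|s| == d.+1).
Proof. by move=> /forallP /(_ s) /implyP. Qed.

Lemma bd0 d : bd Delta d (0 : chain) = 0.
Proof.
apply/ffunP => t; rewrite !ffunE; case: ifP => // _.
by apply: big1 => s _; rewrite ffunE mul0r.
Qed.

Lemma bdD d (x y : chain) : bd Delta d (x + y) = bd Delta d x + bd Delta d y.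
Proof.
apply/ffunP => t; rewrite !ffunE; case: ifP => _; last by rewrite addr0.
by rewrite -big_split; apply: eq_bigr => s _; rewrite ffunE mulrDl.
Qed.

Lemma bdZ d a (x : chain) : bd Delta d (scalec a x) = scalec a (bd Delta d x).
Proof.
apply/ffunP => t; rewrite !ffunE; case: ifP => _; last by rewrite mulr0.
by rewrite mulr_sumr; apply: eq_bigr => s _; rewrite ffunE mulrA.
Qed.

Lemma bd_Cd d (a : chain) : Cd Delta d (bd Delta d.+1 a).
Proof. by apply/forallP => s; rewrite ffunE; case: ifP => _; rewrite ?implybT ?eqxx. Qed.

Definition face_sign (s : {set 'I_n}) (v : 'I_n) : R :=
  (-1) ^+ #|[set u in s | (u < v)%N]|.

Lemma face_sign_setD1_lt (s : {set 'I_n}) (v w : 'I_n) :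
  v \in s -> (v < w)%N -> face_sign (s :\ v) w = - face_sign s w.
Proof.
move=> sv vw; rewrite /face_sign [in RHS](cardsD1 v) inE sv vw exprS mulN1r opprK.
by congr (_ ^+ _); apply: eq_card => u; rewrite !inE andbA.
Qed.

Lemma face_sign_setD1_gt (s : {set 'I_n}) (v w : 'I_n) :
  (w < v)%N -> face_sign (s :\ v) w = face_sign s w.
Proof.
move=> wv; rewrite /face_sign; congr (_ ^+ _); apply: eq_card => u; rewrite !inE.
have [uw|] := ltnP u w; last by rewrite !andbF.
by rewrite !andbT (_ : u != v) //; apply: contraTneq uw => ->; rewrite -leqNgt ltnW.
Qed.

(* Removing [v] then [w], or [w] then [v], leaves the same face with opposite signs. *)
Lemma sum_face_sign_incid (u s : {set 'I_n}) :
  \sum_(v in s) face_sign s v * incid R u (s :\ v) = 0.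
Proof.
pose P v w := [&& v \in s, w \in s, v != w & u == s :\ v :\ w].
pose F v w := face_sign s v * face_sign (s :\ v) w.
transitivity (\sum_(p : 'I_n * 'I_n | P p.1 p.2) F p.1 p.2).
  under eq_bigr do rewrite /incid mulr_sumr.
  rewrite pair_big_dep /=; apply: eq_bigl => -[v w] /=.
  by rewrite /P in_setD1 eq_sym; case: (v != w); case: (w \in s); rewrite ?andbF.
apply: (@sum_antisymmetric_pairs R _ P F) => [v w|v|v w].
- by rewrite /P andbCA eq_sym setDDl setUC -setDDl.
- by rewrite /P eqxx !andbF.
- case/and4P=> sv sw Nvw _; rewrite /F.
  case: (ltngtP v w) => [vw|wv|/val_inj evw]; last by rewrite evw eqxx in Nvw.
  + by rewrite face_sign_setD1_gt // face_sign_setD1_lt // mulrN opprK mulrC.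
  + by rewrite face_sign_setD1_lt // face_sign_setD1_gt // mulrN mulrC.
Qed.

Lemma sum_incid_faces (G : {set 'I_n} -> R) d s :
    simplicial_complex Delta -> s \in Delta -> #|s| = d.+2 ->
  \sum_(t in Delta | #|t| == d.+1) incid R t s * G t =
  \sum_(v in s) face_sign s v * G (s :\ v).
Proof.
move=> [_ faceD] sD cs.
transitivity (\sum_(t in Delta | #|t| == d.+1)
                \sum_(v in s | t == s :\ v) face_sign s v * G (s :\ v)).
  apply: eq_bigr => t _; rewrite /incid mulr_suml.
  by apply: eq_bigr => v /andP[_ /eqP ->].
rewrite (exchange_big_dep (fun v => v \in s)) /=; last by move=> t v _ /andP[].
apply: eq_bigr => v sv; rewrite (big_pred1 (s :\ v)) // => t /=.
rewrite sv /=; apply/idP/idP => [/andP[] //|/eqP ->].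
have csv : #|s :\ v| = d.+1 by move: cs; rewrite (cardsD1 v) sv => -[].
rewrite csv !eqxx !andbT; apply: faceD sD _ _; first exact: subD1set.
by rewrite -cards_eq0 csv.
Qed.

Lemma bd_bd d (a : chain) : simplicial_complex Delta -> bd Delta d (bd Delta d.+1 a) = 0.
Proof.
move=> scD; apply/ffunP => u; rewrite !ffunE; case: ifP => // _.
transitivity (\sum_(s in Delta | #|s| == d.+2)
   a s * \sum_(t in Delta | #|t| == d.+1) incid R t s * incid R u t).
  under eq_bigr => t /andP[tD ct] do rewrite ffunE tD ct /= mulr_suml.
  rewrite exchange_big /=; apply: eq_bigr => s _; rewrite mulr_sumr.
  by apply: eq_bigr => t _; rewrite mulrA.
apply: big1 => s /andP[sD /eqP cs].
by rewrite sum_incid_faces // sum_face_sign_incid mulr0.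
Qed.

Lemma Zd_submodule d : submodule (fun c : chain => Zd Delta d c).
Proof.
split.
- by apply/andP; split; [exact: (submod0 (Cd_submodule d)) | rewrite bd0].
- move=> x y /andP[Cx /eqP bx] /andP[Cy /eqP by']; apply/andP; split.
    exact: (submodD (Cd_submodule d) Cx Cy).
  by rewrite bdD bx by' addr0.
- move=> a x /andP[Cx /eqP bx]; apply/andP; split.
    exact: (submodZ a (Cd_submodule d) Cx).
  by rewrite bdZ bx scalec0.
Qed.

Lemma Bd_submodule d : submodule (Bd Delta (R:=R) d).
Proof.
split.
- by exists 0; [exact: (submod0 (Cd_submodule d.+1)) | exact: bd0].
- move=> _ _ [a Ca <-] [b Cb <-]; exists (a + b); last exact: bdD.
  exact: (submodD (Cd_submodule d.+1) Ca Cb).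
- move=> c _ [a Ca <-]; exists (scalec c a); last exact: bdZ.
  exact: (submodZ c (Cd_submodule d.+1) Ca).
Qed.

Lemma Bd_Zd d (x : chain) : simplicial_complex Delta -> Bd Delta d x -> Zd Delta d x.
Proof. by move=> scD [a _ <-]; rewrite /Zd bd_Cd bd_bd // eqxx. Qed.
End Chains.

Section CompleteLattice.
Variables (disp : Order.disp_t) (L : latticeType disp) (sup inf : (L -> Prop) -> L).
Hypothesis cdl : CDL sup inf.
Local Notation bot := (botL sup).
Local Notation top := (topL inf).

Lemma le_sup (S : L -> Prop) x : S x -> x <= sup S.
Proof. by case: cdl => hsup _ _ _; case: (hsup S) => ub _; apply: ub. Qed.

Lemma sup_le (S : L -> Prop) u : (forall x, S x -> x <= u) -> sup S <= u.
Proof. by case: cdl => hsup _ _ _; case: (hsup S) => _ lub; apply: lub. Qed.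

Lemma inf_le (S : L -> Prop) x : S x -> inf S <= x.
Proof. by case: cdl => _ hinf _ _; case: (hinf S) => lb _; apply: lb. Qed.

Lemma le_inf (S : L -> Prop) u : (forall x, S x -> u <= x) -> u <= inf S.
Proof. by case: cdl => _ hinf _ _; case: (hinf S) => _ glb; apply: glb. Qed.

Lemma botL_le x : bot <= x.
Proof. exact: sup_le. Qed.

Lemma le_topL x : x <= top.
Proof. exact: le_inf. Qed.

Lemma le_botL x : x <= bot -> x = bot.
Proof. by move=> xb; apply/le_anti; rewrite xb botL_le. Qed.

Lemma neq_botL_le x y : x <= y -> x <> bot -> y <> bot.
Proof. by move=> xy xb yb; apply/xb/le_botL; rewrite -yb. Qed.

Lemma sup_ext (S T : L -> Prop) : (forall x, S x <-> T x) -> sup S = sup T.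
Proof.
move=> ST; apply/le_anti/andP; split; apply: sup_le => x Sx; apply: le_sup; exact/ST.
Qed.

Lemma meet_sup_le (S T : L -> Prop) u :
  (forall x y, S x -> T y -> Order.meet x y <= u) -> Order.meet (sup S) (sup T) <= u.
Proof.
case: cdl => _ _ meet_supr _ STu; rewrite meet_supr; apply: sup_le => _ [y Ty ->].
rewrite meetC meet_supr; apply: sup_le => _ [x Sx ->]; rewrite meetC; exact: STu.
Qed.

Lemma meet_neq_botL a b : zero_meet_prime sup inf ->
  a <> bot -> b <> bot -> Order.meet a b <> bot.
Proof. by move=> [_ prime] ab bb /prime []. Qed.

End CompleteLattice.

Section GeneratedFuzzySubmodule.
Variables (n : nat) (R : idomainType).
Variables (disp : Order.disp_t) (L : latticeType disp) (sup inf : (L -> Prop) -> L).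
Hypothesis cdl : CDL sup inf.
Variables (P : chain n R -> Prop) (f : chain n R -> L).
Local Notation gen := (gen_fuzzy inf P f).

Lemma gen_fuzzy_le nu x :
  fuzzy_submodule inf P nu -> (forall y, P y -> f y <= nu y) -> gen x <= nu x.
Proof. by move=> nuF fnu; apply: (inf_le cdl); exists nu. Qed.

Lemma le_gen_fuzzy l x :
    (forall nu, fuzzy_submodule inf P nu -> (forall y, P y -> f y <= nu y) -> l <= nu x) ->
  l <= gen x.
Proof. by move=> lnu; apply: (le_inf cdl) => _ [nu [nuF fnu ->]]; apply: lnu. Qed.

Lemma gen_fuzzy_submodule : fuzzy_submodule inf P gen.
Proof.
split.
- apply/le_anti; rewrite (le_topL cdl) /=.
  by apply: le_gen_fuzzy => nu [-> _ _] _.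
- move=> x y Px Py; apply: le_gen_fuzzy => nu nuF fnu; have [_ nuD _] := nuF.
  by apply: le_trans _ (nuD x y Px Py); apply: leI2; apply: gen_fuzzy_le.
- move=> a x Px; apply: le_gen_fuzzy => nu nuF fnu; have [_ _ nuZ] := nuF.
  exact: le_trans (gen_fuzzy_le x nuF fnu) (nuZ a x Px).
Qed.

End GeneratedFuzzySubmodule.

Section CosetSup.
Variables (n : nat) (R : idomainType).
Variables (disp : Order.disp_t) (L : latticeType disp) (sup inf : (L -> Prop) -> L).
Hypothesis cdl : CDL sup inf.
Variables (Q : chain n R -> Prop) (nu : chain n R -> L).
Hypothesis Q_submodule : submodule Q.
Hypothesis nu0 : nu 0 = topL inf.
Hypothesis nuD : forall x y, Order.meet (nu x) (nu y) <= nu (x + y).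
Hypothesis nuZ : forall a x, nu x <= nu (scalec a x).

Definition coset_sup (h : chain n R) : L := sup (fun l => exists2 z, Q (z - h) & l = nu z).

Lemma le_coset_sup h : nu h <= coset_sup h.
Proof. by apply: (le_sup cdl); exists h; rewrite // subrr; apply: submod0. Qed.

Lemma coset_sup_fuzzy_submodule (P : chain n R -> Prop) : fuzzy_submodule inf P coset_sup.
Proof.
split.
- by apply/le_anti; rewrite (le_topL cdl) -nu0 le_coset_sup.
- move=> x y _ _; apply: (meet_sup_le cdl) => _ _ [z Qzx ->] [w Qwy ->].
  apply: le_trans (nuD z w) _; apply: (le_sup cdl); exists (z + w) => //.
  by rewrite opprD addrACA; apply: submodD.
- move=> a x _; apply: (sup_le cdl) => _ [z Qzx ->].
  apply: le_trans (nuZ a z) _; apply: (le_sup cdl); exists (scalec a z) => //.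
  by rewrite -scalecB; apply: submodZ.
Qed.

End CosetSup.

Section FuzzyHomology.
Variables (n : nat) (Delta : {set {set 'I_n}}) (R : idomainType).
Variables (disp : Order.disp_t) (L : latticeType disp) (sup inf : (L -> Prop) -> L).
Variable mu : {set 'I_n} -> L.
Hypothesis cdl : CDL sup inf.
Hypothesis zero_prime : zero_meet_prime sup inf.
Hypothesis mu_neq_bot : forall s, s \in Delta -> mu s <> botL sup.
Local Notation bot := (botL sup).
Local Notation top := (topL inf).
Local Notation chain := (chain n R).
Local Notation kappa d := (kappa Delta (R:=R) sup inf mu d).
Local Notation zeta d := (zeta Delta (R:=R) sup inf mu d).
Local Notation beta d := (beta Delta (R:=R) sup inf mu d).
Local Notation eta d := (eta_hom Delta (R:=R) sup inf mu d).

Definition meet_mu (r : seq {set 'I_n}) : L := foldr (fun s l => Order.meet (mu s) l) top r.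

Lemma meet_mu_neq_botL r : {subset r <= Delta} -> meet_mu r <> bot.
Proof.
case: zero_prime => top_neq_bot _.
elim: r => [|s r IH] rD /=; first by move=> /esym.
apply: (meet_neq_botL zero_prime); first by apply: mu_neq_bot; apply: rD; rewrite mem_head.
by apply: IH => t rt; apply: rD; rewrite inE rt orbT.
Qed.

Lemma meet_mu_le_sum d nu (c : {set 'I_n} -> R) r :
    fuzzy_submodule inf (Cd Delta d) nu ->
    (forall y, Cd Delta d y -> delta Delta sup mu d y <= nu y) ->
    (forall s, s \in r -> (s \in Delta) && (#|s| == d.+1)) ->
  meet_mu r <= nu (\sum_(s <- r) scalec (c s) (elem R s)).
Proof.
move=> [nu0 nuD nuZ] delta_nu.
have term_Cd s : (s \in Delta) && (#|s| == d.+1) -> Cd Delta d (scalec (c s) (elem R s)).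
  by case/andP=> sD /eqP cs; apply: (submodZ (c s) (Cd_submodule Delta R d)); apply: elem_Cd.
elim: r => [|s r IH] simplices; first by rewrite big_nil nu0.
have sr : (s \in Delta) && (#|s| == d.+1) by apply: simplices; rewrite mem_head.
have {}simplices t : t \in r -> (t \in Delta) && (#|t| == d.+1).
  by move=> rt; apply: simplices; rewrite inE rt orbT.
rewrite big_cons /=; apply: le_trans _ (nuD _ _ (term_Cd _ sr) _); last first.
  by apply: submod_sum (Cd_submodule Delta R d) _ => t /simplices /term_Cd.
apply: leI2; last exact: IH.
case/andP: sr => sD /eqP cs; have Cs := elem_Cd R sD cs.
apply: le_trans _ (nuZ (c s) _ Cs); apply: le_trans _ (delta_nu _ Cs).
by apply: (le_sup cdl); exists s.
Qed.

Lemma kappa_neq_botL d x : Cd Delta d x -> kappa d x <> bot.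
Proof.
move=> Cx; pose r := [seq s <- index_enum {set 'I_n} | x s != 0].
have simplices s : s \in r -> (s \in Delta) && (#|s| == d.+1).
  by rewrite mem_filter => /andP[xs _]; apply: Cd_support Cx xs.
apply: (neq_botL_le cdl _ (meet_mu_neq_botL (r := r) _)); last first.
  by move=> s /simplices /andP[].
apply: (le_gen_fuzzy cdl) => nu nuF delta_nu.
by rewrite [x in nu x]chain_expansion; apply: (meet_mu_le_sum x nuF delta_nu simplices).
Qed.

Lemma kappa_fuzzy_submodule d : fuzzy_submodule inf (Cd Delta d) (kappa d).
Proof. exact: (gen_fuzzy_submodule cdl). Qed.

Lemma zeta_neq_botL d y : zeta d y <> bot <-> Zd Delta d y.
Proof.
rewrite /Defs.zeta; case: ifP => Zy; split => // _.
by apply: kappa_neq_botL; case/andP: Zy.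
Qed.

Lemma beta_neq_botL d y : beta d y <> bot <-> Bd Delta d y.
Proof.
rewrite /Defs.beta; split.
  case: ifP => // Cy beta_y; apply: NNPP => NBy; apply/beta_y/(le_botL cdl).
  apply: le_trans (leIr _ _) _; apply: (sup_le cdl) => l [a [Ca bda _]].
  by case: NBy; exists a.
move=> [a Ca bda]; rewrite -bda bd_Cd; apply: (meet_neq_botL zero_prime).
  exact/kappa_neq_botL/bd_Cd.
apply: (neq_botL_le cdl _ (kappa_neq_botL Ca)); apply: (le_sup cdl).
by exists a.
Qed.

Lemma zetaD d (x y : chain) : Order.meet (zeta d x) (zeta d y) <= zeta d (x + y).
Proof.
rewrite /Defs.zeta; case: ifP => Zx; last exact: le_trans (leIl _ _) (botL_le cdl _).
case: ifP => Zy; last exact: le_trans (leIr _ _) (botL_le cdl _).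
rewrite (submodD (Zd_submodule _ _ _) Zx Zy).
by case: (kappa_fuzzy_submodule d) => _ + _; apply; [case/andP: Zx | case/andP: Zy].
Qed.

Lemma zetaZ d a (x : chain) : zeta d x <= zeta d (scalec a x).
Proof.
rewrite /Defs.zeta; case: ifP => Zx; last exact: (botL_le cdl).
rewrite (submodZ a (Zd_submodule _ _ _) Zx).
by case: (kappa_fuzzy_submodule d) => _ _; apply; case/andP: Zx.
Qed.

Lemma zeta0 d : zeta d 0 = top.
Proof.
rewrite /Defs.zeta (submod0 (Zd_submodule _ _ _)).
by case: (kappa_fuzzy_submodule d).
Qed.

Lemma gen_supp_zeta d x : gen_sub (supp sup (zeta d)) x <-> Zd Delta d x.
Proof. exact: (gen_sub_id (Zd_submodule _ _ _) (zeta_neq_botL d)). Qed.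

Lemma gen_supp_beta d x : gen_sub (supp sup (beta d)) x <-> Bd Delta d x.
Proof. exact: (gen_sub_id (Bd_submodule _ _ _) (beta_neq_botL d)). Qed.

Lemma eta_hom_coset_sup d h :
  eta d h = coset_sup sup (Bd Delta d) (zeta d) h.
Proof.
apply: (sup_ext cdl) => l; split; first by move=> [z [/gen_supp_beta Bzh ->]]; exists z.
by move=> [z Bzh ->]; exists z; split => //; apply/gen_supp_beta.
Qed.

Lemma eta_fuzzy_submodule d : fuzzy_submodule inf (Zd Delta d) (eta d).
Proof.
have [eta0 etaD etaZ] : fuzzy_submodule inf (Zd Delta d) (coset_sup sup (Bd Delta d) (zeta d)).
  apply: coset_sup_fuzzy_submodule => //;
    [exact: Bd_submodule | exact: zeta0 | exact: zetaD | exact: zetaZ].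
split=> [|x y Zx Zy|a x Zx]; rewrite !eta_hom_coset_sup //; [exact: etaD | exact: etaZ].
Qed.

Lemma coset_sup_zeta_kappa d h : simplicial_complex Delta -> Zd Delta d h ->
  coset_sup sup (Bd Delta d) (zeta d) h = coset_sup sup (Bd Delta d) (kappa d) h.
Proof.
move=> scD Zh; apply: (sup_ext cdl) => l.
suff zeta_kappa z : Bd Delta d (z - h) -> zeta d z = kappa d z.
  by split=> -[z Bzh ->]; exists z; rewrite ?zeta_kappa.
move=> Bzh; rewrite /Defs.zeta (_ : Zd Delta d z) // -(subrK h z).
exact: submodD (Zd_submodule _ _ _) (Bd_Zd scD Bzh) Zh.
Qed.

Lemma eta_hom_gt_botL d h : Zd Delta d h -> bot < eta d h.
Proof.
move=> Zh; rewrite lt_neqAle (botL_le cdl) andbT eta_hom_coset_sup; apply/eqP => /esym.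
apply: (neq_botL_le cdl (le_coset_sup cdl (zeta d) (Bd_submodule _ _ _) h)).
exact/zeta_neq_botL.
Qed.

End FuzzyHomology.

Theorem mainTheorem12 (n : nat) (Delta : {set {set 'I_n}}) (R : idomainType)
    (disp : Order.disp_t) (L : latticeType disp) (sup inf : (L -> Prop) -> L)
    (mu : {set 'I_n} -> L) (d : nat) :
  simplicial_complex Delta ->
  PID R ->
  CDL sup inf ->
  zero_meet_prime sup inf ->
  fuzzy_subcomplex Delta mu ->
  (forall sigma, sigma \in Delta -> mu sigma <> botL sup) ->
  let Z := Zd Delta (R:=R) d in
  let B := Bd Delta (R:=R) d in
  let eta_d := eta_hom Delta (R:=R) sup inf mu d in
  [/\ (forall x, gen_sub (supp sup (zeta Delta (R:=R) sup inf mu d)) x <-> Z x),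
      (forall x, gen_sub (supp sup (beta Delta (R:=R) sup inf mu d)) x <-> B x),
      fuzzy_submodule inf Z eta_d,
      (forall h, Z h ->
         eta_d h = sup (fun l => exists2 z, B (z - h) & l = zeta Delta sup inf mu d z) /\
         eta_d h = sup (fun l => exists2 z, B (z - h) & l = kappa Delta sup inf mu d z)) &
      (forall h, Z h -> botL sup < eta_d h)].
Proof.
move=> scD _ cdl zero_prime _ mu_neq_bot Z B eta_d; split.
- exact: gen_supp_zeta.
- exact: gen_supp_beta.
- exact: eta_fuzzy_submodule.
- move=> h Zh; rewrite /eta_d eta_hom_coset_sup //; split => //.
  exact: coset_sup_zeta_kappa.
- exact: eta_hom_gt_botL.
Qed.
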